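(* For every positive integer $m$ one has $\mathcal C_m\subseteq \mathcal C_{m+1}$. Moreover, every odd integer $k\ge 3$ belongs to $\mathcal C_{u}$ where $u=\lceil \log_2 k\rceil$; consequently the set of all odd positive integers equals $\bigcup_{m\ge1}\mathcal C_m$.
   Context: For a positive integer $m$, $\mathcal C_m$ is the set of odd positive integers $k$ for which there exist integers $0\le j_1<j_2<\cdots<j_m\le m+k-2$ such that $2^{k+m}-1\equiv \sum_{i=1}^m 2^{j_i}\pmod k$. *)

From mathcomp Require Import all_boot.
Set Implicit Arguments. Unset Strict Implicit. Unset Printing Implicit Defensive.

(* Note m + k - 2 >= 0 since m, k >= 1. *)
Definition inC (m k : nat) : Prop :=
  odd k /\ 0 < k /\
  exists s : seq nat,
    [/\ size s = m, sorted ltn s, all (fun j => j <= m + k - 2) s &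
        2 ^ (k + m) - 1 = \sum_(j <- s) 2 ^ j %[mod k]].

(* Part 1 (C_m ⊆ C_(m+1)): shift every exponent up by one and add the exponent
   0.  Since 2^(k+m+1) - 1 = 1 + 2 (2^(k+m) - 1), the new sum is congruent to
   the new target.

   Part 2 (k ∈ C_u for odd k >= 3, u = ⌈log2 k⌉): put A = 2^(u-1), so that
   A < k < 2A, and let P = φ(k), so that 2^P ≡ 1 (mod k) and u <= P < k.
   Choose a residue V ≡ 2^(k+u) - 1 (mod k) in the window [A, A+k).  We write
   V = (2^u - 1 - x) + y with x, y < 2^u having the same number of binary
   ones (one of them is twice the other).  The exponents are then the zero
   bits of x together with the one bits of y shifted by P: they are u
   distinct numbers below P + u <= u + k - 1, and since 2^P ≡ 1 their powers
   of two sum to 2^u - 1 - x + y = V modulo k. *)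
From mathcomp Require Import all_boot zify.
From mathcomp Require cyclic.

Set Implicit Arguments.
Unset Strict Implicit.

Definition bit (x i : nat) : bool := odd (x %/ 2 ^ i).
Definition ones (n x : nat) : seq nat := [seq i <- iota 0 n | bit x i].
Definition zeros (n x : nat) : seq nat := [seq i <- iota 0 n | ~~ bit x i].

Lemma bit0 x : bit x 0 = odd x.
Proof. by rewrite /bit expn0 divn1. Qed.

Lemma bitS x i : bit x i.+1 = bit x./2 i.
Proof. by rewrite /bit expnS divnMA divn2. Qed.

Lemma sum_pow2 n : \sum_(i <- iota 0 n) 2 ^ i = (2 ^ n).-1.
Proof.
elim: n => [|n IHn]; first by rewrite big_nil.
have pos : 0 < 2 ^ n by rewrite expn_gt0.
by rewrite -addn1 iotaD big_cat big_seq1 IHn add0n expnD expn1 /=; lia.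
Qed.

Lemma sum_ones n x : x < 2 ^ n -> \sum_(i <- ones n x) 2 ^ i = x.
Proof.
elim: n x => [|n IHn] x ltx.
  by move: ltx; rewrite expn0 ltnS leqn0 => /eqP ->; rewrite big_nil.
rewrite big_filter /= big_cons bit0 (iotaDl 1 0) big_map.
rewrite (eq_big (fun i => bit x./2 i) (fun i => 2 * 2 ^ i)); first last.
- by move=> i _; rewrite add1n expnS.
- by move=> i; rewrite add1n bitS.
rewrite -big_distrr -big_filter IHn; last by rewrite -divn2 ltn_divLR // -expnSr.
by rewrite /= -[RHS]odd_double_half -muln2 mulnC; case: (odd x).
Qed.

Lemma sum_zeros n x : x < 2 ^ n -> \sum_(i <- zeros n x) 2 ^ i = (2 ^ n).-1 - x.
Proof.
move=> ltx; rewrite -[in RHS]sum_pow2 [in RHS](bigID (bit x)) /=.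
by rewrite -[\sum_(i <- _ | bit x i) _]big_filter sum_ones // addKn /zeros big_filter.
Qed.

Lemma size_ones_double n d : d < 2 ^ n -> size (ones n.+1 d.*2) = size (ones n.+1 d).
Proof.
move=> ltd; rewrite !size_filter.
transitivity (count (bit d) (iota 0 n)).
  rewrite /= bit0 odd_double (iotaDl 1 0) count_map.
  by apply: eq_count => i; rewrite /= add1n bitS doubleK.
by rewrite -addn1 iotaD count_cat /= add0n /bit divn_small // !addn0.
Qed.

(* Every V with 2^n <= V <= 3·2^n - 2 is (2^(n+1) - 1 - x) + y for some
   x, y < 2^(n+1) with equally many one digits: take {x, y} = {d, 2d}. *)
Lemma complement_pair n V : 2 ^ n <= V -> V.+2 <= 3 * 2 ^ n ->
  exists x y, [/\ x < 2 ^ n.+1, y < 2 ^ n.+1,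
    size (ones n.+1 x) = size (ones n.+1 y) & (2 ^ n.+1).-1 - x + y = V].
Proof.
rewrite expnS => lo hi.
have [le_V | lt_V] := leqP (2 * 2 ^ n).-1 V.
- pose d := V - (2 * 2 ^ n).-1; have ltd : d < 2 ^ n by lia.
  by exists d, d.*2; rewrite size_ones_double //; split=> //; lia.
- pose e := (2 * 2 ^ n).-1 - V; have lte : e < 2 ^ n by lia.
  by exists e.*2, e; rewrite size_ones_double //; split=> //; lia.
Qed.

Lemma shifted_exponents k u P x y :
  2 ^ P = 1 %[mod k] -> u <= P -> x < 2 ^ u -> y < 2 ^ u ->
  size (ones u x) = size (ones u y) ->
  exists s : seq nat, [/\ size s = u, sorted ltn s, all (fun j => j < P + u) s &
    \sum_(j <- s) 2 ^ j = (2 ^ u).-1 - x + y %[mod k]].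
Proof.
move=> period le_uP ltx lty same_ones.
exists (zeros u x ++ map (addn P) (ones u y)); split.
- rewrite size_cat size_map -same_ones !size_filter addnC.
  by rewrite (count_predC (bit x)) size_iota.
- rewrite sorted_pairwise; last exact: ltn_trans.
  rewrite pairwise_cat -!sorted_pairwise; try exact: ltn_trans.
  apply/and3P; split.
  + apply/allrelP => i j; rewrite mem_filter mem_iota => /andP[_ /andP[_ lti]].
    by case/mapP=> j' _ ->; lia.
  + exact: (sorted_filter ltn_trans _ (iota_ltn_sorted 0 u)).
  + rewrite sorted_map.
    apply: sub_sorted (sorted_filter ltn_trans _ (iota_ltn_sorted 0 u)) => i j.
    by rewrite /= ltn_add2l.
- apply/allP => j; rewrite mem_cat => /orP[|/mapP[i]];
    rewrite mem_filter mem_iota => /andP[_ /andP[_ lt_u]]; lia.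
- rewrite big_cat big_map sum_zeros //.
  rewrite (eq_bigr (fun i => 2 ^ P * 2 ^ i)); last by move=> i _; rewrite expnD.
  rewrite -big_distrr sum_ones //.
  by rewrite /= -modnDmr -modnMml period modnMml mul1n modnDmr.
Qed.

Lemma residue_in_window k a t : 0 < k ->
  exists V, [/\ a <= V, V < a + k & V = t %[mod k]].
Proof.
move=> k0; exists (a + (t + k.-1 * a) %% k); split.
- exact: leq_addr.
- by rewrite ltn_add2l ltn_mod.
- by rewrite modnDmr addnCA -mulSn prednK // addnC mulnC modnMDl.
Qed.

(* Euler's totient of n > 1 is smaller than n: 0 is not coprime to n. *)
Lemma totient_lt n : 1 < n -> totient n < n.
Proof.
case: n => [|n] // n1; rewrite totient_count_coprime big_nat_recl //.
have -> : coprime n.+1 0 = false by rewrite /coprime gcdn0 gtn_eqF.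
rewrite add0n ltnS.
apply: (@leq_trans (\sum_(0 <= i < n) 1)); first by apply: leq_sum => i _; apply: leq_b1.
by rewrite sum_nat_const_nat muln1 subn0.
Qed.

(* A modulus k with 2^P ≡ 1 (mod k), P > 0, divides 2^P - 1, so k < 2^P. *)
Lemma exp2_mod_one_gt k P : 0 < P -> 2 ^ P = 1 %[mod k] -> k < 2 ^ P.
Proof.
move=> P0 period; have gt1 : 1 < 2 ^ P by rewrite -[1](expn0 2) ltn_exp2l.
have : k %| 2 ^ P - 1 by rewrite -eqn_mod_dvd ?period // ltnW.
by move/dvdn_leq; rewrite subn_gt0 => /(_ gt1); lia.
Qed.

Lemma odd_up_log_bounds k : odd k -> 1 < k ->
  2 ^ (up_log 2 k).-1 < k < 2 ^ up_log 2 k.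
Proof.
move=> odd_k k1; have /andP[-> le_k] := up_log_bounds (isT : 1 < 2) k1.
rewrite ltn_neqAle le_k andbT; apply: contraTneq odd_k => ->.
have : 0 < up_log 2 k by rewrite up_log_gt0 k1.
by case: (up_log 2 k) => // u _; rewrite expnS oddM.
Qed.

Lemma inC_succ m k : 0 < m -> inC m k -> inC m.+1 k.
Proof.
move=> m0 [odd_k [k0 [s [size_s sorted_s bound_s sum_s]]]].
split=> //; split=> //; exists (0 :: map succn s); split.
- by rewrite /= size_map size_s.
- rewrite /= path_min_sorted ?sorted_map //.
  by apply/allP => _ /mapP[i _ ->].
- rewrite /=; apply/allP => _ /mapP[i in_s ->].
  by have /= := allP bound_s i in_s; lia.
- have target : 2 ^ (k + m.+1) - 1 = 1 + 2 * (2 ^ (k + m) - 1).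
    have pos : 0 < 2 ^ (k + m) by rewrite expn_gt0.
    by rewrite addnS expnS; lia.
  rewrite big_cons big_map expn0 target.
  rewrite (eq_bigr (fun j => 2 * 2 ^ j)) -?big_distrr; last by move=> j _; rewrite expnS.
  by rewrite -modnDmr -modnMmr sum_s modnMmr modnDmr.
Qed.

Lemma inC_up_log k : odd k -> 3 <= k -> inC (up_log 2 k) k.
Proof.
move=> odd_k k3; have k1 : 1 < k by lia.
have [lo hi] := andP (odd_up_log_bounds odd_k k1).
have [w def_u] : exists w, up_log 2 k = w.+1.
  by exists (up_log 2 k).-1; rewrite prednK // up_log_gt0 k1.
rewrite def_u /= in lo hi *; rewrite expnS in hi.
pose P := totient k.
have period : 2 ^ P = 1 %[mod k] by apply: cyclic.Euler_exp_totient; rewrite coprime2n.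
have ltPk : P < k by apply: totient_lt.
have bound_P : P + w.+1 <= (w.+1 + k - 2).+1 by lia.
have le_uP : w < P.
  have P0 : 0 < P by rewrite totient_gt0; lia.
  by rewrite -(ltn_exp2l _ _ (isT : 1 < 2)); apply: ltn_trans lo (exp2_mod_one_gt P0 period).
have [V [loV hiV eqV]] := residue_in_window (2 ^ w) (2 ^ (k + w.+1) - 1) (ltnW k1).
have [|x [y [ltx lty same_ones sumV]]] := complement_pair loV; first by lia.
have [s [size_s sorted_s bound_s sum_s]] := shifted_exponents period le_uP ltx lty same_ones.
split=> //; split; first exact: ltnW.
exists s; split=> //.
- by apply: sub_all bound_s => j /= lt_j; rewrite -ltnS (leq_trans lt_j bound_P).
- by rewrite sum_s sumV eqV.
Qed.

Lemma inC_one : inC 1 1.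
Proof. by split=> //; split=> //; exists [:: 0]; rewrite !modn1. Qed.

Theorem mainTheorem4 :
  (forall m k : nat, 0 < m -> inC m k -> inC m.+1 k) /\
  (forall k : nat, odd k -> 3 <= k -> inC (up_log 2 k) k) /\
  (forall k : nat, (odd k /\ 0 < k) <-> (exists m : nat, 0 < m /\ inC m k)).
Proof.
split; first exact: inC_succ.
split; first exact: inC_up_log.
move=> k; split; last by case=> m [_ [odd_k [k0 _]]].
case=> odd_k k0; have [k3 | k_small] := leqP 3 k.
- exists (up_log 2 k); split; last exact: inC_up_log.
  by rewrite up_log_gt0; lia.
- have -> : k = 1 by case: k odd_k k0 k_small => [|[|[|]]].
  by exists 1; split; last exact: inC_one.
Qed.
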